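(* In the setting of the (tweaked) $s$-wide replacement product described in the context, let $z\in\mathbb F_2^{[n]}$ with $\mathrm{bias}(z)\le\eta_0$ and let $P_z$ be the diagonal matrix indexed by $[n]\times[d_1]^s$ with $(P_z)_{(v,h),(v,h)}=(-1)^{z_v}$. Suppose $\gamma\ge0$ is such that $\sigma_2(M_i)\le\gamma$ for all $0\le i\le s-2$. Then $$\Big\|\,M_{s-2}P_z\,M_{s-3}P_z\cdots M_1P_z\,M_0P_z\Big\|_{\mathrm{op}}\le(\eta_0+2\gamma)^{\lfloor (s-1)/2\rfloor}.$$
   Context: Let $G$ be a $d_1$-regular undirected graph on $[n]$ whose neighbours of each vertex $v$ are labeled $v_G[1],\dots,v_G[d_1]$, with rotation map $\mathrm{rot}_G:[n]\times[d_1]\to[n]\times[d_1]$, $\mathrm{rot}_G(v,j)=(v',j')$ iff $v_G[j]=v'$ and $v'_G[j']=v$; assume it is locally invertible, i.e. there is a bijection $\varphi:[d_1]\to[d_1]$ with $\mathrm{rot}_G(v,j)=(v_G[j],\varphi(j))$. Let $A_G$ be the normalized adjacency matrix of $G$. Let $H$ be a $d_2$-regular undirected graph on vertex set $[d_1]^s$ with normalized adjacency matrix $A_H$. For $i\in\{0,\dots,s-1\}$ let $\mathrm{Rot}_i:[n]\times[d_1]^s\to[n]\times[d_1]^s$ send $(v,(a_0,\dots,a_{s-1}))$ to $(v',(a_0,\dots,a_{i-1},a_i',a_{i+1},\dots,a_{s-1}))$ where $(v',a_i')=\mathrm{rot}_G(v,a_i)$, and let $G_i$ be the permutation matrix realizing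 $\mathrm{Rot}_i$ on $\mathbb R^{[n]\times[d_1]^s}=\mathbb R^{V(G)}\otimes\mathbb R^{V(H)}$. For every integer $i$ set $M_i=(I\otimes A_H)\,G_{i\bmod s}\,(I\otimes A_H)$. $\sigma_2(X)$ denotes the second largest singular value of $X$; norms and singular values are with respect to the inner product given by the uniform probability measure on coordinates (equivalently the standard ones, the space being fixed). $\mathrm{bias}(z)=|\mathbb E_{v\in[n]}(-1)^{z_v}|$. *)

From HB Require Import structures.
From mathcomp Require Import all_boot all_order all_algebra.
Set Implicit Arguments. Unset Strict Implicit. Unset Printing Implicit Defensive.
Import Order.TTheory GRing.Theory Num.Theory.
Local Open Scope ring_scope.

Definition Lbl (d1 s : nat) := {ffun 'I_s -> 'I_d1}.
Definition Vtx (n d1 s : nat) := ('I_n * Lbl d1 s)%type.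

(* A rotation map of an undirected d-regular graph on a vertex type T:
   rot (v,j) = (v',j') iff v[j] = v' and v'[j'] = v; this means rot is an involution. *)
Definition is_rotation_map (T : finType) (d : nat) (rot : T * 'I_d -> T * 'I_d) :=
  involutive rot.

Definition locally_invertible (T : finType) (d : nat) (rot : T * 'I_d -> T * 'I_d) :=
  exists phi : 'I_d -> 'I_d, bijective phi /\ forall v j, (rot (v, j)).2 = phi j.

Definition mxOf (R : fieldType) (T : finType) (F : T -> T -> R) : 'M[R]_#|{: T}| :=
  \matrix_(i, j) F (enum_val i) (enum_val j).

Definition adjH (R : fieldType) (W : finType) (d : nat) (rotH : W * 'I_d -> W * 'I_d)
  (u w : W) : R := #|[set k : 'I_d | (rotH (u, k)).1 == w]|%:R / d%:R.
Arguments adjH R {W d} rotH u w.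

(* Entries of I (x) A_H on [n] x [d1]^s. *)
Definition IAH (R : fieldType) (n d1 s d2 : nat)
  (rotH : Lbl d1 s * 'I_d2 -> Lbl d1 s * 'I_d2) (x y : Vtx n d1 s) : R :=
  (x.1 == y.1)%:R * adjH R rotH x.2 y.2.
Arguments IAH R n {d1 s d2} rotH x y.

(* Rot_{i mod s} on [n] x [d1]^s (the identity only in the degenerate case s = 0). *)
Definition Rot (n d1 s : nat) (rotG : 'I_n * 'I_d1 -> 'I_n * 'I_d1) (i : nat)
  (x : Vtx n d1 s) : Vtx n d1 s :=
  match insub (i %% s)%N : option 'I_s with
  | Some j => let r := rotG (x.1, x.2 j) in
              (r.1, [ffun k => if k == j then r.2 else x.2 k])
  | None => x
  end.

Definition Gmx (R : fieldType) (n d1 s : nat) (rotG : 'I_n * 'I_d1 -> 'I_n * 'I_d1)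
  (i : nat) : 'M[R]_#|{: Vtx n d1 s}| :=
  mxOf (fun x y : Vtx n d1 s => (Rot rotG i x == y)%:R).
Arguments Gmx R {n d1} s rotG i.

Definition Mmx (R : fieldType) (n d1 s d2 : nat) (rotG : 'I_n * 'I_d1 -> 'I_n * 'I_d1)
  (rotH : Lbl d1 s * 'I_d2 -> Lbl d1 s * 'I_d2) (i : nat) : 'M[R]_#|{: Vtx n d1 s}| :=
  mxOf (IAH R n rotH) *m Gmx R s rotG i *m mxOf (IAH R n rotH).
Arguments Mmx R {n d1 s d2} rotG rotH i.

Definition Pz (R : fieldType) (n d1 s : nat) (z : 'I_n -> bool) : 'M[R]_#|{: Vtx n d1 s}| :=
  mxOf (fun x y : Vtx n d1 s => (x == y)%:R * (-1) ^+ z x.1).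
Arguments Pz R {n} d1 s z.

Fixpoint prodMP (R : fieldType) (n d1 s d2 : nat) (rotG : 'I_n * 'I_d1 -> 'I_n * 'I_d1)
  (rotH : Lbl d1 s * 'I_d2 -> Lbl d1 s * 'I_d2) (z : 'I_n -> bool) (k : nat)
  : 'M[R]_#|{: Vtx n d1 s}| :=
  match k with
  | 0 => 1%:M
  | k'.+1 => Mmx R rotG rotH k' *m Pz R d1 s z *m prodMP R rotG rotH z k'
  end.
Arguments prodMP R {n d1 s d2} rotG rotH z k.

Definition bias (R : numFieldType) (n : nat) (z : 'I_n -> bool) : R :=
  `| n%:R^-1 * \sum_(v < n) (-1) ^+ z v |.
Arguments bias R {n} z.

Definition vnorm (R : rcfType) (N : nat) (f : 'cV[R]_N) : R :=
  Num.sqrt (N%:R^-1 * \sum_(i < N) f i 0 ^+ 2).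

Definition opnorm_le (R : rcfType) (N : nat) (X : 'M[R]_N) (c : R) : Prop :=
  forall f : 'cV[R]_N, vnorm (X *m f) <= c * vnorm f.

(* sv is the list of singular values of X (with multiplicity, nonincreasing):
   nonnegative reals whose squares are the eigenvalues of X^T X
   (the adjoint w.r.t. the uniform inner product is the transpose). *)
Definition singular_values (R : rcfType) (N : nat) (X : 'M[R]_N) (sv : seq R) : Prop :=
  [/\ size sv = N, sorted (fun a b => b <= a) sv, all (fun a => 0 <= a) sv &
      char_poly (X^T *m X) = \prod_(a <- sv) ('X - (a ^+ 2)%:P)].

Definition sigma2_le (R : rcfType) (N : nat) (X : 'M[R]_N) (c : R) : Prop :=
  exists sv, singular_values X sv /\ sv`_1 <= c.

From HB Require Import structures.
From mathcomp Require Import all_boot all_order all_algebra.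
From mathcomp Require Import sesquilinear spectral complex.
From mathcomp Require Import ring lra.
Import Order.TTheory GRing.Theory Num.Theory.
Set Implicit Arguments. Unset Strict Implicit. Unset Printing Implicit Defensive.
Local Open Scope ring_scope.

(* Operator norms are taken for the Euclidean norm on R^N; the norm of the uniform
   probability measure differs from it by the factor 1/sqrt N, which does not change
   operator norms.  Let J = (1/N) 1 1^T be the projection onto the constant vectors.
   1. Every M_i is symmetric, entrywise nonnegative and fixes 1 (it is a product of
      the symmetric stochastic matrix I (x) A_H and the symmetric permutation matrix
      G_i), hence a contraction; P_z is a diagonal matrix of signs, an isometry.
   2. Spectral step: if such an M has sigma_2(M) <= gamma then ||M - J|| <= gamma.
      By the spectral theorem for M^T M (proved through its complexification), only
      the eigenvalue 1, carried by the constant vector, can exceed sigma_2(M)^2, so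
      M contracts the orthogonal complement of the constants by gamma.
   3. Pair step: writing M = J + (M - J) twice,
        M_{i+1} P M_i P = J P J P + J P (M_i - J) P + (M_{i+1} - J) P M_i P,
      and ||J P_z J|| is the absolute mean of the signs (-1)^z_v, i.e. bias(z).
   4. Grouping the product in consecutive pairs, plus possibly one factor of norm at
      most 1, gives the theorem. *)

Section Euclid.
Variables (R : rcfType) (N : nat).
Implicit Types (f g : 'cV[R]_N) (a c : R).

Definition dot f g : R := \sum_(i < N) f i 0 * g i 0.
Definition nrm2 f : R := dot f f.
Definition nr f : R := Num.sqrt (nrm2 f).

Lemma dotE f g : dot f g = (f^T *m g) 0 0.
Proof. by rewrite mxE; apply: eq_bigr => i _; rewrite mxE. Qed.

Lemma dotZr a f g : dot f (a *: g) = a * dot f g.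
Proof. by rewrite /dot mulr_sumr; apply: eq_bigr => i _; rewrite mxE mulrCA. Qed.

Lemma nrm2_mul (M : 'M[R]_N) f : nrm2 (M *m f) = dot f (M^T *m M *m f).
Proof. by rewrite /nrm2 !dotE trmx_mul !mulmxA. Qed.

Lemma nrm2_ge0 f : 0 <= nrm2 f.
Proof. by apply: sumr_ge0 => i _; rewrite -expr2 sqr_ge0. Qed.

Lemma nrm2_eq0 f : nrm2 f = 0 -> f = 0.
Proof.
move/psumr_eq0P => f0; apply/matrixP => i j; rewrite ord1 mxE.
have /eqP : f i 0 * f i 0 = 0 by apply: f0 => // k _; rewrite -expr2 sqr_ge0.
by rewrite mulf_eq0 orbb => /eqP.
Qed.

Lemma nrm2D f g : nrm2 (f + g) = nrm2 f + 2 * dot f g + nrm2 g.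
Proof.
rewrite /nrm2 /dot mulr_sumr -!big_split /=; apply: eq_bigr => i _.
by rewrite !mxE; ring.
Qed.

Lemma nrm2Z a f : nrm2 (a *: f) = a ^+ 2 * nrm2 f.
Proof. by rewrite /nrm2 /dot mulr_sumr; apply: eq_bigr => i _; rewrite !mxE; ring. Qed.

Lemma nr_ge0 f : 0 <= nr f.
Proof. exact: sqrtr_ge0. Qed.

Lemma nr_sqr f : nr f ^+ 2 = nrm2 f.
Proof. by rewrite sqr_sqrtr ?nrm2_ge0. Qed.

Lemma nrZ a f : nr (a *: f) = `|a| * nr f.
Proof. by rewrite /nr nrm2Z sqrtrM ?sqr_ge0 // sqrtr_sqr. Qed.

Lemma nr_le f g c : 0 <= c -> nrm2 f <= c ^+ 2 * nrm2 g -> nr f <= c * nr g.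
Proof.
move=> c0 fg; rewrite /nr -(ger0_norm c0) -sqrtr_sqr -sqrtrM ?sqr_ge0 //.
by rewrite ler_sqrt ?mulr_ge0 ?sqr_ge0 ?nrm2_ge0 // real_normK ?ger0_real.
Qed.

(* Cauchy-Schwarz, from the nonnegativity of nrm2 (nrm2 f *: g - dot f g *: f). *)
Lemma cauchy_schwarz f g : dot f g ^+ 2 <= nrm2 f * nrm2 g.
Proof.
have [/nrm2_eq0 ->|nz_f] := eqVneq (nrm2 f) 0.
  by rewrite {1}/dot big1 ?expr0n ?mulr_ge0 ?nrm2_ge0 // => i _; rewrite mxE mul0r.
have f_gt0 : 0 < nrm2 f by rewrite lt_def nz_f nrm2_ge0.
have expand x y : nrm2 (x *: g - y *: f)
    = x ^+ 2 * nrm2 g - 2 * x * y * dot f g + y ^+ 2 * nrm2 f.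
  rewrite /nrm2 /dot !mulr_sumr -sumrB -big_split /=; apply: eq_bigr => i _.
  by rewrite !mxE; ring.
have := nrm2_ge0 (nrm2 f *: g - dot f g *: f); rewrite expand.
have -> : nrm2 f ^+ 2 * nrm2 g - 2 * nrm2 f * dot f g * dot f g
    + dot f g ^+ 2 * nrm2 f = nrm2 f * (nrm2 f * nrm2 g - dot f g ^+ 2) by ring.
by rewrite pmulr_rge0 // subr_ge0.
Qed.

Lemma dot_le f g : dot f g <= nr f * nr g.
Proof.
rewrite -sqrtrM ?nrm2_ge0 //; apply: le_trans (ler_norm _) _.
by rewrite -sqrtr_sqr ler_sqrt ?cauchy_schwarz // mulr_ge0 ?nrm2_ge0.
Qed.

Lemma nrD f g : nr (f + g) <= nr f + nr g.
Proof.
rewrite -ler_sqr ?nnegrE ?addr_ge0 ?nr_ge0 // sqrrD !nr_sqr nrm2D.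
by have := dot_le f g; lra.
Qed.

End Euclid.

Section OperatorBounds.
Variables (R : rcfType) (N : nat).
Implicit Types (X Y : 'M[R]_N) (a b c : R).

Definition opbound X c := forall f : 'cV[R]_N, nr (X *m f) <= c * nr f.

Lemma opbound_mul X Y a b : 0 <= a -> opbound X a -> opbound Y b -> opbound (X *m Y) (a * b).
Proof.
move=> a0 HX HY f; rewrite -mulmxA; apply: le_trans (HX _) _.
by rewrite -mulrA ler_wpM2l.
Qed.

Lemma opbound_add X Y a b : opbound X a -> opbound Y b -> opbound (X + Y) (a + b).
Proof.
move=> HX HY f; rewrite mulmxDl; apply: le_trans (nrD _ _) _.
by rewrite mulrDl lerD.
Qed.

Lemma opbound_le X a b : a <= b -> opbound X a -> opbound X b.
Proof. by move=> ab HX f; apply: le_trans (HX f) _; rewrite ler_wpM2r ?nr_ge0. Qed.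

Lemma opbound1 : opbound 1%:M 1.
Proof. by move=> f; rewrite mul1mx mul1r. Qed.

Lemma opbound0 c : 0 <= c -> opbound 0 c.
Proof.
move=> c0 f; rewrite mul0mx /nr /nrm2 /dot big1 ?sqrtr0 ?mulr_ge0 ?nr_ge0 //.
by move=> i _; rewrite mxE mul0r.
Qed.

(* The norm of the uniform probability measure is the Euclidean norm scaled by
   1 / sqrt N, so both define the same operator norm. *)
Lemma opbound_opnorm_le X c : 0 <= c -> opbound X c -> opnorm_le X c.
Proof.
move=> c0 HX f; rewrite /vnorm.
have sum_sqr (g : 'cV[R]_N) : \sum_(i < N) g i 0 ^+ 2 = nrm2 g.
  by apply: eq_bigr => i _; rewrite expr2.
rewrite !sum_sqr !sqrtrM ?invr_ge0 ?ler0n // mulrCA.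
by rewrite ler_wpM2l ?sqrtr_ge0 // HX.
Qed.

Local Notation ones := (const_mx 1 : 'cV[R]_N).

(* Schur test: a nonnegative doubly stochastic matrix is a contraction; by Jensen,
   each coordinate of X f squared is at most the X-average of the squares of f. *)
Lemma opbound_stochastic X : (forall i j, 0 <= X i j) ->
  X *m ones = ones -> X^T *m ones = ones -> opbound X 1.
Proof.
move=> X0 X1 XT1 f; apply: nr_le => //; rewrite expr1n mul1r.
have rows i : \sum_j X i j = 1.
  have := congr1 (fun A : 'cV[R]_N => A i 0) X1; rewrite !mxE => <-.
  by apply: eq_bigr => j _; rewrite mxE mulr1.
have cols j : \sum_i X i j = 1.
  have := congr1 (fun A : 'cV[R]_N => A j 0) XT1; rewrite !mxE => <-.
  by apply: eq_bigr => i _; rewrite !mxE mulr1.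
have jensen i : (X *m f) i 0 * (X *m f) i 0 <= \sum_j X i j * (f j 0 * f j 0).
  set m := (X *m f) i 0; have mE : m = \sum_j X i j * f j 0 by rewrite /m mxE.
  have : 0 <= \sum_j X i j * ((f j 0 - m) * (f j 0 - m)).
    by apply: sumr_ge0 => j _; rewrite mulr_ge0 // -expr2 sqr_ge0.
  have -> : \sum_j X i j * ((f j 0 - m) * (f j 0 - m)) = \sum_j X i j * (f j 0 * f j 0)
      - 2 * m * (\sum_j X i j * f j 0) + m * m * (\sum_j X i j).
    by rewrite !mulr_sumr -sumrB -big_split /=; apply: eq_bigr => j _; ring.
  by rewrite rows -mE; lra.
rewrite /nrm2 /dot; apply: le_trans (ler_sum _ (fun i _ => jensen i)) _.
rewrite exchange_big /=; apply: ler_sum => j _.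
by rewrite -mulr_suml cols mul1r.
Qed.

Lemma opbound_sign_diag (sg : 'rV[R]_N) : (forall i, sg 0 i ^+ 2 = 1) ->
  opbound (diag_mx sg) 1.
Proof.
move=> sg2 f; rewrite mul1r le_eqVlt; apply/orP; left; apply/eqP; congr Num.sqrt.
apply: eq_bigr => i _; rewrite mul_diag_mx !mxE.
by rewrite mulrACA -expr2 sg2 mul1r.
Qed.

Lemma opbound_paired_product (X W : nat -> 'M[R]_N) (m : nat) (c : R) :
    0 <= c -> W 0%N = 1%:M -> (forall k, W k.+1 = X k *m W k) ->
    (forall i, opbound (X i) 1) -> (forall i, (i.+2 <= m)%N -> opbound (X i.+1 *m X i) c) ->
  forall k, (k <= m)%N -> opbound (W k) (c ^+ k./2).
Proof.
move=> c0 W0 WS X1 X2; elim/ltn_ind => -[|[|k]] IH km.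
- by rewrite W0; apply: opbound1.
- by rewrite WS W0 mulmx1; apply: X1.
- rewrite !WS mulmxA /= exprS; apply: opbound_mul => //; first exact: X2.
  by apply: IH => //; apply: leq_trans km; rewrite leqW.
Qed.

End OperatorBounds.

Section Averaging.
Variables (R : rcfType) (N : nat).
Implicit Types (f g : 'cV[R]_N) (M P : 'M[R]_N).
Local Notation ones := (const_mx 1 : 'cV[R]_N).
Local Notation J := (const_mx N%:R^-1 : 'M[R]_N).

Definition mean f : R := N%:R^-1 * \sum_i f i 0.

Lemma dot_ones f : dot f ones = \sum_i f i 0.
Proof. by apply: eq_bigr => i _; rewrite mxE mulr1. Qed.

Lemma J_mul f : J *m f = mean f *: ones.
Proof.
apply/matrixP => i k; rewrite (ord1 k) !mxE /mean mulr1 mulr_sumr.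
by apply: eq_bigr => j _; rewrite !mxE.
Qed.

Lemma centered_ortho f : dot (f - mean f *: ones) ones = 0.
Proof.
rewrite dot_ones; under eq_bigr do rewrite !mxE mulr1.
rewrite sumrB sumr_const card_ord /mean.
have [N0|N_gt0] := posnP N.
  by rewrite big1 ?mulr0 ?mul0rn ?subrr // => i _; have := ltn_ord i; rewrite {2}N0.
by rewrite -[_ *+ N]mulr_natr mulrAC mulVf ?mul1r ?subrr // pnatr_eq0 -lt0n.
Qed.

Lemma nrm2_center f : nrm2 f = nrm2 (f - mean f *: ones) + nrm2 (mean f *: ones).
Proof.
have := nrm2D (f - mean f *: ones) (mean f *: ones).
by rewrite subrK dotZr centered_ortho mulr0 mulr0 addr0.
Qed.

Lemma opbound_J : opbound J 1.
Proof.
move=> f; rewrite J_mul; apply: nr_le => //.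
by rewrite expr1n mul1r [X in _ <= X]nrm2_center lerDr nrm2_ge0.
Qed.

Lemma opbound_deflated M (gam : R) : 0 <= gam -> M *m ones = ones ->
    (forall g, dot g ones = 0 -> nrm2 (M *m g) <= gam ^+ 2 * nrm2 g) ->
  opbound (M - J) gam.
Proof.
move=> gam0 M1 contract f; set g := f - mean f *: ones.
have -> : (M - J) *m f = M *m g by rewrite mulmxBl J_mul mulmxBr -scalemxAr M1.
apply: le_trans (nr_le gam0 (contract g (centered_ortho f))) _.
rewrite ler_wpM2l // -[nr f]mul1r; apply: nr_le => //.
by rewrite expr1n mul1r [X in _ <= X]nrm2_center lerDl nrm2_ge0.
Qed.

Lemma opbound_JDJ (sg : 'rV[R]_N) :
  opbound (J *m diag_mx sg *m J) `|N%:R^-1 * \sum_i sg 0 i|.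
Proof.
move=> f; rewrite -!mulmxA [J *m f]J_mul -!scalemxAr J_mul scalerA nrZ.
have -> : mean (diag_mx sg *m ones) = N%:R^-1 * \sum_i sg 0 i.
  by congr (_ * _); apply: eq_bigr => j _; rewrite mul_diag_mx !mxE mulr1.
rewrite normrM mulrAC mulrC ler_wpM2l // -nrZ -J_mul -[nr f]mul1r.
exact: opbound_J.
Qed.

Lemma opbound_pair M1 M0 P (b gam : R) : 0 <= gam -> 0 <= b ->
    opbound P 1 -> opbound M0 1 -> opbound (M1 - J) gam -> opbound (M0 - J) gam ->
    opbound (J *m P *m J) b ->
  opbound (M1 *m P *m M0 *m P) (b + 2 * gam).
Proof.
move=> gam0 b0 HP HM0 HE1 HE0 HJ.
have -> : M1 *m P *m M0 *m P = J *m P *m J *m P + J *m P *m (M0 - J) *m P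
    + (M1 - J) *m P *m M0 *m P.
  rewrite !(mulmxBl, mulmxBr, mulmxA).
  by rewrite (addrC (J *m P *m J *m P)) subrK addrC subrK.
(* The three terms have norms at most b, gam and gam respectively. *)
have -> : b + 2 * gam = b * 1 + 1 * 1 * gam * 1 + gam * 1 * 1 * 1 by ring.
have HJ1 := opbound_J.
by apply: opbound_add; first apply: opbound_add;
  do ![apply: opbound_mul => //; rewrite ?mulr_ge0].
Qed.

End Averaging.

Lemma char_poly_similar (F : fieldType) (N : nat) (P D : 'M[F]_N) :
  P \in unitmx -> char_poly (invmx P *m D *m P) = char_poly D.
Proof.
move=> Pu; set P' := map_mx (@polyC F) P.
have conj : P' *m char_poly_mx (invmx P *m D *m P) = char_poly_mx D *m P'.
  rewrite /char_poly_mx mulmxBr mulmxBl scalar_mxC; congr (_ - _).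
  by rewrite -map_mxM !mulmxA mulmxV // mul1mx map_mxM.
have := congr1 determinant conj; rewrite !det_mulmx mulrC.
have detP' : \det P' != 0 by rewrite det_map_mx polyC_eq0 -unitfE -unitmxE.
by move/(mulIf detP').
Qed.

(* Spectral theorem for a real symmetric matrix B, in coordinates: there are
   (complex) coordinate functionals phi k, orthonormal in the sense of Parseval's
   identity, diagonalizing B with real eigenvalues e k, the roots of char_poly B.
   It is obtained from the complex spectral theorem for the hermitian matrix B. *)
Lemma real_symmetric_spectral (R : rcfType) (N : nat) (B : 'M[R]_N) : B^T = B ->
  exists (e : 'I_N -> R) (phi : 'I_N -> 'cV[R]_N -> R[i]),
  [/\ char_poly B = \prod_(k < N) ('X - (e k)%:P),
      forall f g : 'cV[R]_N, ((f^T *m g) 0 0)%:C%C = \sum_(k < N) (phi k f)^* * phi k g &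
      forall k (g : 'cV[R]_N), phi k (B *m g) = (e k)%:C%C * phi k g].
Proof.
move=> Bt; pose rc := real_complex R; set Bc := map_mx rc B.
have Bsym : Bc \is symmetricmx.
  apply/is_hermitianmxP; rewrite expr0 scale1r.
  by apply/matrixP => i j; rewrite !mxE -[in LHS]Bt mxE.
have Breal : Bc \is a mxOver Num.real.
  by apply/mxOverP => i j; rewrite mxE /rc /= complex_real.
have Bherm := realsym_hermsym Bsym Breal.
have /orthomx_spectralP Bdiag := hermitian_normalmx Bherm.
set P := spectralmx Bc in Bdiag; set d := spectral_diag Bc in Bdiag.
have Punitary : P \is unitarymx := spectral_unitarymx Bc.
have Pu : P \in unitmx := unitarymx_unit Punitary.
have dreal := hermitian_spectral_diag_real Bherm.
pose e k := complex.Re (d 0 k).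
have de k : (e k)%:C%C = d 0 k by apply: RRe_real; apply: (mxOverP dreal).
exists e, (fun k f => (P *m map_mx rc f) k 0); split.
- apply: (@map_poly_inj _ _ rc).
  rewrite map_char_poly -/Bc Bdiag char_poly_similar // char_poly_trig ?diag_mx_is_trig //.
  rewrite rmorph_prod; apply: eq_bigr => k _.
  by rewrite rmorphB /= map_polyX map_polyC /= mxE eqxx mulr1n de.
- move=> f g.
  have -> : ((f^T *m g) 0 0)%:C%C = ((map_mx rc f)^T *m map_mx rc g) 0 0.
    by rewrite map_trmx -map_mxM [in RHS]mxE.
  have fr : (map_mx rc f)^T = ((map_mx rc f)^t* )%sesqui.
    apply/matrixP => i j; rewrite !mxE /rc /=.
    by apply/esym/CrealP; rewrite complex_real.
  have PP : (P^t* *m P)%sesqui = 1%:M.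
    by have := mulmxKtV (1%:M : 'M_N) Punitary (erefl _); rewrite mul1mx.
  have -> : (map_mx rc f)^T *m map_mx rc g
      = ((P *m map_mx rc f)^t* )%sesqui *m (P *m map_mx rc g).
    by rewrite fr trmx_mul map_mxM mulmxA -[_ *m _ *m P]mulmxA PP mulmx1.
  by rewrite mxE; apply: eq_bigr => k _; rewrite !mxE.
- move=> k g.
  rewrite map_mxM -/Bc mulmxA Bdiag !mulmxA mulmxV // mul1mx -mulmxA mul_diag_mx mxE.
  by rewrite de.
Qed.

(* In spectral coordinates for B, a vector orthogonal to a fixed vector u of B
   only sees the eigenvalues of B on the orthogonal complement of u. *)
Section SpectralDeflation.
Variables (R : rcfType) (N : nat) (B : 'M[R]_N).
Variables (e : 'I_N -> R) (phi : 'I_N -> 'cV[R]_N -> R[i]).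
Hypothesis parseval :
  forall f g : 'cV[R]_N, ((f^T *m g) 0 0)%:C%C = \sum_(k < N) (phi k f)^* * phi k g.
Hypothesis phiB : forall k (g : 'cV[R]_N), phi k (B *m g) = (e k)%:C%C * phi k g.

Lemma nrm2_coords (f : 'cV[R]_N) : (nrm2 f)%:C%C = \sum_k phi k f * (phi k f)^*.
Proof. by rewrite /nrm2 dotE parseval; apply: eq_bigr => k _; rewrite mulrC. Qed.

Lemma quad_coords (f : 'cV[R]_N) :
  (dot f (B *m f))%:C%C = \sum_k (e k)%:C%C * (phi k f * (phi k f)^*).
Proof.
by rewrite dotE parseval; apply: eq_bigr => k _; rewrite phiB mulrCA [_^* * _]mulrC.
Qed.

Lemma quad_le_coords (f : 'cV[R]_N) (t : R) :
  (forall k, e k <= t \/ phi k f = 0) -> dot f (B *m f) <= t * nrm2 f.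
Proof.
move=> small; rewrite -lecR rmorphM /= nrm2_coords quad_coords mulr_sumr.
apply: ler_sum => k _; have [ek|->] := small k; last by rewrite mul0r !mulr0.
by rewrite ler_wpM2r ?mul_conjC_ge0 // lecR.
Qed.

Lemma coord_nonzero (u : 'cV[R]_N) : u != 0 -> exists k, phi k u != 0.
Proof.
move=> nz_u; apply/existsP; apply: contraR nz_u; rewrite negb_exists => /forallP u0.
apply/eqP/nrm2_eq0/(@complexI R); rewrite nrm2_coords rmorph0 big1 // => k _.
by move/negbNE/eqP: (u0 k) => ->; rewrite mul0r.
Qed.

Lemma fixed_coord (u : 'cV[R]_N) k : B *m u = u -> e k != 1 -> phi k u = 0.
Proof.
move=> Bu ek1; apply/eqP; have /eqP := phiB k u.
rewrite Bu -subr_eq0 -{1}[phi k u]mul1r -mulrBl mulf_eq0 => /orP[|//].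
by rewrite subr_eq0 -(rmorph1 (real_complex R)) (inj_eq (@complexI R)) eq_sym (negPf ek1).
Qed.

Lemma deflation (u g : 'cV[R]_N) (t : R) :
    B *m u = u -> u != 0 -> dot g u = 0 -> (forall k, e k <= 1) ->
    (forall j k, t < e j -> t < e k -> j = k) ->
  dot g (B *m g) <= t * nrm2 g.
Proof.
move=> Bu nz_u gu e_le1 top_uniq.
have [t_ge1|t_lt1] := leP 1 t.
  by apply: quad_le_coords => k; left; apply: le_trans t_ge1.
have [k1 u_k1] := coord_nonzero nz_u.
have e_k1 : e k1 = 1 by apply/eqP; apply: contraNT u_k1 => /(fixed_coord Bu) ->.
have others j : j != k1 -> e j <= t.
  move=> jk1; rewrite leNgt; apply: contra jk1 => tj.
  by apply/eqP/top_uniq; rewrite ?e_k1.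
have g_k1 : phi k1 g = 0.
  have := parseval g u; rewrite -dotE gu rmorph0 (bigD1 k1) //= big1 ?addr0.
    by move/esym/eqP; rewrite mulf_eq0 (negPf u_k1) orbF conjC_eq0 => /eqP.
  move=> j jk1; rewrite (fixed_coord Bu) ?mulr0 //.
  by rewrite lt_eqF ?(le_lt_trans (others j jk1) t_lt1).
apply: quad_le_coords => k; have [->|kk1] := eqVneq k k1; first by right.
by left; apply: others.
Qed.

End SpectralDeflation.

Lemma MtM_eigen_le1 (R : rcfType) N (M : 'M[R]_N) (a : R) :
  opbound M 1 -> root (char_poly (M^T *m M)) a -> a <= 1.
Proof.
move=> M_le1; rewrite -eigenvalue_root_char => /eigenvalueP [v vB nz_v].
have BT : (M^T *m M)^T = M^T *m M by rewrite trmx_mul trmxK.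
have Bv : M^T *m M *m v^T = a *: v^T by rewrite -[in LHS]BT -trmx_mul vB linearZ.
have v_gt0 : 0 < nrm2 v^T.
  rewrite lt_def nrm2_ge0 andbT; apply: contra nz_v => /eqP/nrm2_eq0/eqP.
  by rewrite trmx_eq0.
have := M_le1 v^T; rewrite mul1r -ler_sqr ?nnegrE ?nr_ge0 // !nr_sqr.
by rewrite nrm2_mul Bv dotZr -/(nrm2 _) -[X in _ <= X]mul1r ler_pM2r.
Qed.

Lemma sq_second_gap (R : rcfType) (sv : seq R) :
    sorted (fun a b => b <= a) sv -> all (fun a => 0 <= a) sv ->
  (count (fun x : R => (sv`_1 ^+ 2 < x)%R) [seq a ^+ 2 | a <- sv] <= 1)%N.
Proof.
case: sv => [//|a [|b t]] /= srt pos; first by case: (_ < _).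
move: srt => /andP [_ srt]; move: pos => /and3P [_ b0 /allP t_ge0].
have tr : transitive (fun a b : R => b <= a) by move=> x y w h1 h2; apply: le_trans h2 h1.
have /allP b_ge := order_path_min tr srt.
rewrite ltxx add0n.
suff -> : count (fun x => b ^+ 2 < x) [seq c ^+ 2 | c <- t] = 0%N by case: (_ < _).
apply/eqP; rewrite -leqn0 leqNgt -has_count; apply/hasPn => x /mapP [y yt ->].
by rewrite -leNgt ler_sqr ?nnegrE ?(t_ge0 y yt) // b_ge.
Qed.

Section SecondSingularValue.
Variables (R : rcfType) (N : nat).
Local Notation ones := (const_mx 1 : 'cV[R]_N).
Local Notation J := (const_mx N%:R^-1 : 'M[R]_N).

(* If M is a contraction fixing the constants, as does M^T, then on the orthogonal
   complement of the constants M contracts by sigma_2(M): the top eigenvalue 1 of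
   M^T M is carried by the constant vector, and the others are at most sigma_2^2. *)
Lemma sigma2_contract (M : 'M[R]_N) (gam : R) :
    sigma2_le M gam -> opbound M 1 -> M *m ones = ones -> M^T *m ones = ones ->
  forall g, dot g ones = 0 -> nrm2 (M *m g) <= gam ^+ 2 * nrm2 g.
Proof.
move=> [sv [[_ sv_sorted sv_ge0 char_sv] sv1]] M_le1 M1 MT1 g g1.
have [N0|N_gt0] := posnP N.
  by rewrite /nrm2 /dot !big1 ?mulr0 // => i _; have := ltn_ord i; rewrite {2}N0.
have BT : (M^T *m M)^T = M^T *m M by rewrite trmx_mul trmxK.
have [e [phi [char_e parseval phiB]]] := real_symmetric_spectral BT.
have e_sv : perm_eq [seq e k | k <- enum 'I_N] [seq a ^+ 2 | a <- sv].
  by apply: prod_XsubC_eq; rewrite !big_map -enumT big_enum /= -char_e char_sv.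
have e_le1 k : e k <= 1.
  by apply: (MtM_eigen_le1 M_le1); rewrite char_e (bigD1 k) //= rootM root_XsubC eqxx.
have top_uniq j k : sv`_1 ^+ 2 < e j -> sv`_1 ^+ 2 < e k -> j = k.
  have := sq_second_gap sv_sorted sv_ge0; rewrite -(permP e_sv) count_map.
  rewrite -sum1_count big_enum_cond /= sum1_card => /card_le1_eqP top1 ej ek.
  exact/esym/(top1 j k).
have sv1_le : sv`_1 ^+ 2 <= gam ^+ 2.
  have sv1_ge0 : 0 <= sv`_1.
    have [lt1|le1] := ltnP 1 (size sv); last by rewrite nth_default.
    by apply: (allP sv_ge0); rewrite mem_nth.
  by rewrite ler_sqr ?nnegrE ?(le_trans sv1_ge0 sv1).
have nz_ones : ones != 0.
  by apply/negP => /eqP/matrixP/(_ (Ordinal N_gt0) 0)/eqP; rewrite !mxE oner_eq0.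
have B1 : M^T *m M *m ones = ones by rewrite -mulmxA M1 MT1.
rewrite nrm2_mul; apply: le_trans (ler_wpM2r (nrm2_ge0 g) sv1_le).
exact: (deflation parseval phiB B1 nz_ones g1 e_le1 top_uniq).
Qed.

Lemma opbound_sigma2 (M : 'M[R]_N) (gam : R) : 0 <= gam ->
    sigma2_le M gam -> opbound M 1 -> M *m ones = ones -> M^T = M ->
  opbound (M - J) gam.
Proof.
move=> gam0 sig M_le1 M1 MT; apply: opbound_deflated => //.
by apply: sigma2_contract; rewrite ?MT.
Qed.

End SecondSingularValue.

Lemma mulmx_ge0 (R : numDomainType) m n p (X : 'M[R]_(m, n)) (Y : 'M[R]_(n, p)) :
    (forall i j, 0 <= X i j) -> (forall i j, 0 <= Y i j) ->
  forall i j, 0 <= (X *m Y) i j.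
Proof. by move=> X0 Y0 i j; rewrite mxE; apply: sumr_ge0 => k _; apply: mulr_ge0. Qed.

Section KernelMatrices.
Variables (R : rcfType) (T : finType).
Local Notation N := #|{: T}|.
Local Notation ones := (const_mx 1 : 'cV[R]_N).

Lemma sum_enum_val (F : T -> R) : \sum_(i < N) F (enum_val i) = \sum_x F x.
Proof. by rewrite -big_enum_val; apply: eq_bigl => x; rewrite inE. Qed.

Lemma mxOf_ones (F : T -> T -> R) : (forall x, \sum_y F x y = 1) -> mxOf F *m ones = ones.
Proof.
move=> F1; apply/matrixP => i k; rewrite !mxE -{2}(F1 (enum_val i)) -sum_enum_val.
by apply: eq_bigr => j _; rewrite !mxE mulr1.
Qed.

Lemma mxOf_tr (F : T -> T -> R) : (forall x y, F x y = F y x) -> (mxOf F)^T = mxOf F.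
Proof. by move=> Fsym; apply/matrixP => i j; rewrite !mxE Fsym. Qed.

End KernelMatrices.

Section ReplacementProduct.
Variables (R : rcfType) (n d1 d2 s : nat).
Variable rotG : 'I_n * 'I_d1 -> 'I_n * 'I_d1.
Variable rotH : Lbl d1 s * 'I_d2 -> Lbl d1 s * 'I_d2.
Hypothesis rotG_inv : involutive rotG.
Hypothesis rotH_inv : involutive rotH.
Local Notation T := (Vtx n d1 s).
Local Notation N := #|{: T}|.
Local Notation ones := (const_mx 1 : 'cV[R]_N).
Local Notation A := (mxOf (IAH R n rotH)).
Local Notation M := (Mmx R rotG rotH).

Lemma Rot_involutive i : involutive (Rot rotG i : T -> T).
Proof.
move=> [a h]; rewrite /Rot; case: insub => [j|] //=.
set r := rotG (a, h j).
have rr : rotG (r.1, r.2) = (a, h j) by rewrite -surjective_pairing rotG_inv.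
rewrite ffunE eqxx rr /=; congr (_, _); apply/ffunP => k; rewrite !ffunE.
by case: eqP => [->|].
Qed.

Lemma G_ones i : Gmx R s rotG i *m ones = ones.
Proof.
apply: mxOf_ones => x; rewrite (bigD1 (Rot rotG i x)) //= eqxx big1 ?addr0 //.
by move=> y; rewrite eq_sym => /negPf ->.
Qed.

Lemma G_tr i : (Gmx R s rotG i)^T = Gmx R s rotG i.
Proof.
apply: mxOf_tr => x y.
by have -> : (Rot rotG i x == y) = (Rot rotG i y == x)
  by apply/eqP/eqP => <-; apply: Rot_involutive.
Qed.

(* The number of H-edges from u to w is symmetric, rotH being an involution. *)
Lemma adjH_count_sym (u w : Lbl d1 s) :
  #|[set k : 'I_d2 | (rotH (u, k)).1 == w]| = #|[set k : 'I_d2 | (rotH (w, k)).1 == u]|.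
Proof.
suff le u' w' : (#|[set k : 'I_d2 | (rotH (u', k)).1 == w']|
    <= #|[set k : 'I_d2 | (rotH (w', k)).1 == u']|)%N by apply/eqP; rewrite eqn_leq !le.
pose back k := (rotH (u', k)).2.
have back_inj : {in [set k : 'I_d2 | (rotH (u', k)).1 == w'] &, injective back}.
  move=> k k'; rewrite !inE /back => /eqP e1 /eqP e2 e3.
  have : rotH (u', k) = rotH (u', k').
    by rewrite [LHS]surjective_pairing [RHS]surjective_pairing e1 e2 e3.
  by move/(can_inj rotH_inv) => [].
rewrite -(card_in_imset back_inj); apply: subset_leq_card; apply/subsetP => x /imsetP [k].
rewrite inE => /eqP e1 ->; rewrite inE /back.
by rewrite -e1 -surjective_pairing rotH_inv.
Qed.

Lemma IAH_rowsum (x : T) : (0 < d2)%N -> \sum_y IAH R n rotH x y = 1.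
Proof.
move=> d2_gt0; rewrite -(pair_bigA _ (fun a b => IAH R n rotH x (a, b))) /=.
rewrite (bigD1 x.1) //= [X in _ + X]big1 ?addr0; last first.
  by move=> a /negPf ne; apply: big1 => b _; rewrite /IAH /= eq_sym ne mul0r.
under eq_bigr do rewrite /IAH /= eqxx mul1r.
rewrite /adjH -mulr_suml -natr_sum.
have -> : (\sum_w #|[set k : 'I_d2 | (rotH (x.2, k)).1 == w]|)%N = d2.
  rewrite -[RHS]card_ord -sum1_card (partition_big (fun k => (rotH (x.2, k)).1) predT) //=.
  by apply: eq_bigr => w _; rewrite -sum1_card; apply: eq_bigl => k; rewrite inE.
by rewrite mulfV // pnatr_eq0 -lt0n.
Qed.

Lemma M_symmetric_stochastic i : (0 < d2)%N ->
  [/\ forall a b, 0 <= M i a b, M i *m ones = ones & (M i)^T = M i].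
Proof.
move=> d2_gt0.
have A0 a b : 0 <= A a b by rewrite mxE mulr_ge0 ?ler0n ?divr_ge0 ?ler0n.
have G0 a b : 0 <= Gmx R s rotG i a b by rewrite mxE ler0n.
have A1 : A *m ones = ones by apply: mxOf_ones => x; apply: IAH_rowsum.
have AT : A^T = A by apply: mxOf_tr => x y; rewrite /IAH /adjH eq_sym adjH_count_sym.
split; first by apply: mulmx_ge0 => //; apply: mulmx_ge0.
- by rewrite /Mmx -!mulmxA A1 G_ones A1.
- by rewrite /Mmx !trmx_mul AT G_tr mulmxA.
Qed.

(* For d2 = 0 the normalized adjacency matrix of H, hence M_i, vanishes. *)
Lemma M_eq0 i : d2 = 0%N -> M i = 0.
Proof.
move=> d2_0; have A0 : A = 0.
  have d2R : (d2%:R : R) = 0 by rewrite d2_0.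
  by apply/matrixP => a b; rewrite !mxE /IAH /adjH d2R invr0 !mulr0.
by rewrite /Mmx A0 !mul0mx.
Qed.

Lemma opbound_M i : opbound (M i) 1.
Proof.
have [d2_0|d2_gt0] := posnP d2; first by rewrite M_eq0 //; apply: opbound0.
have [M0 M1 MT] := M_symmetric_stochastic i d2_gt0.
by apply: opbound_stochastic; rewrite ?MT.
Qed.

Variable z : 'I_n -> bool.
Local Notation P := (Pz R d1 s z).

Definition signs : 'rV[R]_N := \row_(i < N) (-1) ^+ z (enum_val i).1.

Lemma Pz_diag : P = diag_mx signs.
Proof.
apply/matrixP => i j; rewrite !mxE (inj_eq enum_val_inj).
by case: eqP => [->|]; rewrite ?mul1r ?mul0r ?mulr1n ?mulr0n.
Qed.

Lemma opbound_Pz : opbound P 1.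
Proof.
rewrite Pz_diag; apply: opbound_sign_diag => i; rewrite mxE.
by case: (z _); rewrite ?expr1 ?expr0 ?sqrrN ?expr1n.
Qed.

(* Each cloud has the same size, so the mean of the signs over [n] x [d1]^s is the
   mean over [n]. *)
Lemma mean_signs : `|N%:R^-1 * \sum_i signs 0 i| <= bias R z.
Proof.
have [N0|N_gt0] := posnP N.
  rewrite big1 ?mulr0 ?normr0 ?normr_ge0 // => i _.
  by have := ltn_ord i; rewrite {2}N0.
rewrite le_eqVlt; apply/orP; left; apply/eqP; rewrite /bias.
have -> : \sum_i signs 0 i = \sum_(x : T) (-1) ^+ z x.1.
  by rewrite -[RHS]sum_enum_val; apply: eq_bigr => i _; rewrite mxE.
rewrite -(pair_bigA _ (fun a (b : Lbl d1 s) => (-1) ^+ z (a, b).1)) /=.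
under eq_bigr do rewrite sumr_const -mulr_natl.
rewrite -mulr_sumr.
have NE : N = (n * #|{: Lbl d1 s}|)%N by rewrite card_prod card_ord.
have L_gt0 : (0 < #|{: Lbl d1 s}|)%N by move: N_gt0; rewrite NE muln_gt0 => /andP [].
rewrite NE natrM invfM -mulrA [X in _ * X]mulrA mulVf ?mul1r //.
by rewrite pnatr_eq0 -lt0n.
Qed.

Lemma opbound_MPMP i (gam : R) : 0 <= gam ->
    sigma2_le (M i) gam -> sigma2_le (M i.+1) gam ->
  opbound (M i.+1 *m P *m (M i *m P)) (bias R z + 2 * gam).
Proof.
move=> gam0 sig_i sig_i1.
have bias0 : 0 <= bias R z by apply: normr_ge0.
have [d2_0|d2_gt0] := posnP d2.
  by rewrite M_eq0 // !mul0mx; apply: opbound0; rewrite addr_ge0 ?mulr_ge0.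
have near_J j : sigma2_le (M j) gam -> opbound (M j - const_mx N%:R^-1) gam.
  have [_ M1 MT] := M_symmetric_stochastic j d2_gt0.
  by move=> sig_j; apply: opbound_sigma2 => //; apply: opbound_M.
rewrite mulmxA; apply: opbound_pair => //.
- exact: opbound_Pz.
- exact: opbound_M.
- exact: near_J.
- exact: near_J.
- by rewrite Pz_diag; apply: opbound_le mean_signs (opbound_JDJ _).
Qed.

End ReplacementProduct.

Unset Implicit Arguments.

Theorem mainTheorem2 (R : rcfType) (n d1 d2 s : nat)
  (rotG : 'I_n * 'I_d1 -> 'I_n * 'I_d1)
  (rotH : Lbl d1 s * 'I_d2 -> Lbl d1 s * 'I_d2)
  (z : 'I_n -> bool) (eta0 gamma : R) :
  is_rotation_map rotG -> locally_invertible rotG ->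
  is_rotation_map rotH ->
  bias R z <= eta0 ->
  0 <= gamma ->
  (forall i : nat, (i.+2 <= s)%N -> sigma2_le (Mmx R rotG rotH i) gamma) ->
  opnorm_le (prodMP R rotG rotH z (s.-1)) ((eta0 + 2 * gamma) ^+ (s.-1)./2).
Proof.
move=> rotG_inv _ rotH_inv bias_le gamma0 sigma2_M.
have bias0 : 0 <= bias R z by apply: normr_ge0.
have c0 : 0 <= eta0 + 2 * gamma by lra.
apply: opbound_opnorm_le; first exact: exprn_ge0.
apply: (opbound_paired_product (X := fun i => Mmx R rotG rotH i *m Pz R d1 s z) (m := s.-1)) => //.
- move=> i; rewrite -[1]mul1r; apply: opbound_mul => //.
    exact: opbound_M.
  exact: opbound_Pz.
- move=> i i_lt; apply: opbound_le (opbound_MPMP rotG_inv rotH_inv z gamma0 _ _).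
  + by rewrite lerD2r.
  + by apply: sigma2_M; apply: leq_trans i_lt (leq_pred s).
  + by apply: sigma2_M; move: i_lt; case: (s).
Qed.
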